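(* Let $X_0^*$ be a $\{1,2,\dots\}$-valued random variable with $\mathbf P(X_0^*=k)\sim c_0m^{-k}k^{-\alpha}$ as $k\to\infty$, for some $0<c_0<\infty$ and $2\le\alpha\le4$. For integers $M$, let $X_0^{(M)}:=X_0^*\mathbf 1_{\{X_0^*\le M\}}$ and $p_M:=\big(1+\mathbf E\{[(m-1)X_0^{(M)}-1]m^{X_0^{(M)}}\}\big)^{-1}$. Then, as $M\to\infty$, $$p_M-p_c(X_0^* )\sim\begin{cases}\frac{(m-1)c_0\,p_c(X_0^* )^2}{\alpha-2}\,\frac{1}{M^{\alpha-2}},&2<\alpha\le4,\\[2pt] \frac{1}{(m-1)c_0}\,\frac{1}{\log M},&\alpha=2.\end{cases}$$
   Context: Fix an integer $m\ge2$. $p_c(X_0^* ):=\frac{1}{1+\mathbf E\{[(m-1)X_0^*-1]m^{X_0^*}\}}$, interpreted as $0$ when the expectation is infinite (so $p_c(X_0^* )=0$ when $\alpha=2$, and $p_c(X_0^* )>0$ when $\alpha>2$); it is the critical parameter of the recursive system $X_{n+1}\overset d=(X_{n,1}+\cdots+X_{n,m}-1)^+$ started from the law $(1-p)\delta_0+pP_{X_0^*}$. $a_M\sim b_M$ means $a_M/b_M\to1$. *)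

From Stdlib Require Import Reals Lra Lia Classical ClassicalEpsilon.
Open Scope R_scope.

Definition series_value (f : nat -> R) : option R :=
  match excluded_middle_informative (exists l, infinite_sum f l) with
  | left H => Some (proj1_sig (constructive_indefinite_description _ H))
  | right _ => None
  end.

(* A law on {0,1,2,...} is given by its mass function q : nat -> R.
   Expectation E{h(X)} = sum_k q k * h k (as a convergent series). *)
Definition expect (q : nat -> R) (h : nat -> R) : option R :=
  series_value (fun k => q k * h k).

Definition gfun (m : nat) (x : nat) : R :=
  ((INR m - 1) * INR x - 1) * (INR m) ^ x.

(* 1 / (1 + E), interpreted as 0 when the expectation is infinite
   (i.e. the series of nonnegative terms diverges). *)
Definition crit_of (E : option R) : R :=
  match E with Some l => / (1 + l) | None => 0 end.

Definition p_c (m : nat) (q : nat -> R) : R :=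
  crit_of (expect q (gfun m)).

(* p_M, where X_0^(M) = X0star 1_{X0star <= M}, so
   E{h(X_0^(M))} = sum_k q k * h (if k <= M then k else 0). *)
Definition p_M (m : nat) (q : nat -> R) (M : nat) : R :=
  crit_of (expect q (fun k => gfun m (if Nat.leb k M then k else 0%nat))).

(* Write crit_mass k = q k * (1 + [(m-1)k - 1] m^k) and S M for its partial
   sums.  Truncating X_0^* at M gives 1 + E{[(m-1)X_0^(M) - 1] m^(X_0^(M))}
   = S M, hence p_M = 1 / S M, while p_c = 1 / lim S (or 0 if S diverges).
   The tail hypothesis gives crit_mass k ~ (m-1) c0 k^(1-alpha).
   - If alpha > 2 this is the increment of -C k^(-(alpha-2)) with
     C = (m-1) c0 / (alpha-2), so S converges to E = 1/p_c and, by a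
     Stolz-Cesaro argument on tails, E - S M ~ C M^(-(alpha-2)); then
     p_M - p_c = (E - S M) / (E S M) ~ C p_c^2 M^(-(alpha-2)).
   - If alpha = 2 it is the increment of (m-1) c0 ln k, so by Stolz-Cesaro
     S M ~ (m-1) c0 ln M -> +oo, p_c = 0 and p_M ~ 1 / ((m-1) c0 ln M). *)

From Stdlib Require Import Reals Lra Lia Arith ClassicalEpsilon.
From Coquelicot Require Import Coquelicot.
Open Scope R_scope.

Lemma relative_error (x d e eps : R) :
  0 < d -> e < eps -> Rabs (x - d) <= e * d -> Rabs (x / d - 1) < eps.
Proof.
  intros hd he hx.
  replace (x / d - 1) with ((x - d) / d) by (field; lra).
  unfold Rdiv. rewrite Rabs_mult, Rabs_inv, (Rabs_right d) by lra.
  apply (Rmult_lt_reg_r d); [lra|].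
  rewrite Rmult_assoc, Rinv_l, Rmult_1_r by lra. nra.
Qed.

Lemma abs_le_limit (x y : nat -> R) (X Y : R) :
  eventually (fun j => Rabs (x j) <= y j) ->
  is_lim_seq x X -> is_lim_seq y Y -> Rabs X <= Y.
Proof.
  intros hle hx hy.
  exact (is_lim_seq_le_loc _ _ (Rbar_abs X) Y hle (is_lim_seq_abs _ _ hx) hy).
Qed.

Lemma increments_eventually_close (a D : nat -> R) (e : R) :
  0 < e ->
  (forall k, (1 <= k)%nat -> D k < D (S k)) ->
  is_lim_seq (fun k => a (S k) / (D (S k) - D k)) 1 ->
  exists N, forall k, (N <= k)%nat ->
    Rabs (a (S k) - (D (S k) - D k)) <= e * (D (S k) - D k).
Proof.
  intros he Dinc Hr. apply is_lim_seq_spec in Hr.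
  destruct (Hr (mkposreal e he)) as [N HN]; simpl in HN.
  exists (max N 1). intros k Hk.
  assert (hd : 0 < D (S k) - D k) by (specialize (Dinc k ltac:(lia)); lra).
  replace (a (S k) - (D (S k) - D k))
    with ((a (S k) / (D (S k) - D k) - 1) * (D (S k) - D k)) by (field; lra).
  rewrite Rabs_mult, (Rabs_right (D (S k) - D k)) by lra.
  apply Rmult_le_compat_r; [lra|]. left. apply HN. lia.
Qed.

Lemma partial_sums_track (a D : nat -> R) (e : R) (N : nat) :
  (forall k, (N <= k)%nat ->
     Rabs (a (S k) - (D (S k) - D k)) <= e * (D (S k) - D k)) ->
  forall M, (N <= M)%nat ->
  Rabs (sum_f_R0 a M - sum_f_R0 a N - (D M - D N)) <= e * (D M - D N).
Proof.
  intros step M HM. induction HM as [|M HM IH].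
  - replace (sum_f_R0 a N - sum_f_R0 a N - (D N - D N)) with 0 by ring.
    rewrite Rabs_R0. lra.
  - simpl sum_f_R0. specialize (step M HM).
    replace (sum_f_R0 a M + a (S M) - sum_f_R0 a N - (D (S M) - D N))
      with ((sum_f_R0 a M - sum_f_R0 a N - (D M - D N))
            + (a (S M) - (D (S M) - D M))) by ring.
    eapply Rle_trans; [apply Rabs_triang|]. lra.
Qed.

Lemma summable_of_increments (a D : nat -> R) (B : R) :
  (forall k, 0 <= a k) ->
  (forall k, D k <= B) ->
  (forall k, (1 <= k)%nat -> D k < D (S k)) ->
  is_lim_seq (fun k => a (S k) / (D (S k) - D k)) 1 ->
  exists E : R, is_lim_seq (sum_f_R0 a) E.
Proof.
  intros apos DB Dinc Hr.
  destruct (increments_eventually_close a D 1 Rlt_0_1 Dinc Hr) as [N HN].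
  assert (grow : forall n, sum_f_R0 a n <= sum_f_R0 a (S n)).
  { intros n. simpl. specialize (apos (S n)). lra. }
  assert (bound : forall M, sum_f_R0 a M <= sum_f_R0 a N + 2 * (B - D N)).
  { intros M. destruct (le_lt_dec N M) as [h|h].
    - assert (H := partial_sums_track a D 1 N HN M h).
      apply Rabs_le_between in H. specialize (DB M). lra.
    - assert (H := growing_prop _ _ _ grow (Nat.lt_le_incl _ _ h)).
      specialize (DB N). lra. }
  destruct (ex_finite_lim_seq_incr _ _ grow bound) as [E HE]. now exists E.
Qed.

Lemma tail_asymptotic (a D : nat -> R) (E : R) :
  is_lim_seq (sum_f_R0 a) E ->
  is_lim_seq D 0 ->
  (forall k, (1 <= k)%nat -> D k < 0) ->
  (forall k, (1 <= k)%nat -> D k < D (S k)) ->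
  is_lim_seq (fun k => a (S k) / (D (S k) - D k)) 1 ->
  is_lim_seq (fun M => (E - sum_f_R0 a M) / (- D M)) 1.
Proof.
  intros HS HD Dneg Dinc Hr. apply is_lim_seq_spec. intros eps.
  assert (he : 0 < eps / 2) by (destruct eps; simpl; lra).
  destruct (increments_eventually_close a D _ he Dinc Hr) as [N HN].
  exists (max N 1). intros M HM.
  assert (remainder : Rabs (E - sum_f_R0 a M - (0 - D M)) <= eps / 2 * (0 - D M)).
  { apply (abs_le_limit (fun j => sum_f_R0 a j - sum_f_R0 a M - (D j - D M))
                        (fun j => eps / 2 * (D j - D M))).
    - exists M. apply partial_sums_track. intros k Hk. apply HN. lia.
    - apply is_lim_seq_minus'; [apply is_lim_seq_minus'|]; auto using is_lim_seq_const.
      apply is_lim_seq_minus'; auto using is_lim_seq_const.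
    - apply is_lim_seq_scal_l with (a := eps / 2) (lu := Finite (0 - D M)).
      apply is_lim_seq_minus'; auto using is_lim_seq_const. }
  apply (relative_error _ _ (eps / 2)).
  - specialize (Dneg M ltac:(lia)). lra.
  - destruct eps; simpl; lra.
  - replace (- D M) with (0 - D M) by ring. exact remainder.
Qed.

Lemma partial_asymptotic (a D : nat -> R) :
  is_lim_seq D p_infty ->
  (forall k, (1 <= k)%nat -> D k < D (S k)) ->
  is_lim_seq (fun k => a (S k) / (D (S k) - D k)) 1 ->
  is_lim_seq (fun M => sum_f_R0 a M / D M) 1.
Proof.
  intros HD Dinc Hr. apply is_lim_seq_spec. intros eps.
  assert (he : 0 < eps / 4) by (destruct eps; simpl; lra).
  destruct (increments_eventually_close a D _ he Dinc Hr) as [N HN].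
  set (B := Rabs (sum_f_R0 a N - D N) + eps / 4 * Rabs (D N)).
  assert (HB : 0 <= B) by (unfold B; assert (0 <= Rabs (D N)) by apply Rabs_pos;
                           assert (0 <= Rabs (sum_f_R0 a N - D N)) by apply Rabs_pos; nra).
  destruct (proj2 (is_lim_seq_spec _ _) HD (4 * B / eps + 1)) as [N1 HN1].
  exists (max N N1). intros M HM.
  specialize (HN1 M ltac:(lia)).
  assert (large : B <= eps / 4 * D M).
  { assert (4 * B / eps * (eps / 4) = B) by (destruct eps; simpl in *; field; lra). nra. }
  assert (track := partial_sums_track a D _ N HN M ltac:(lia)).
  apply (relative_error _ _ (eps / 2)).
  - assert (0 <= 4 * B / eps) by (destruct eps; simpl in *; apply Rmult_le_pos; [lra|];
                                   left; apply Rinv_0_lt_compat; lra). lra.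
  - destruct eps; simpl; lra.
  - replace (sum_f_R0 a M - D M)
      with ((sum_f_R0 a M - sum_f_R0 a N - (D M - D N)) + (sum_f_R0 a N - D N)) by ring.
    eapply Rle_trans; [apply Rabs_triang|].
    assert (- Rabs (D N) <= D N)
      by (pose proof (RRle_abs (- D N)) as h; rewrite Rabs_Ropp in h; lra).
    unfold B in large. nra.
Qed.

Lemma difference_quotient_at_1 (f : R -> R) (l : R) :
  derivable_pt_lim f 1 l ->
  is_lim_seq (fun n => INR n * (f 1 - f (1 - / INR n))) l.
Proof.
  intros Hd. apply is_lim_seq_spec. intros eps.
  destruct (Hd eps (cond_pos eps)) as [del Hdel].
  destruct (INR_archimed del 1 (cond_pos del)) as [N HN].
  exists (max N 1). intros n Hn.
  assert (hn : 0 < INR n) by (apply lt_0_INR; lia).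
  assert (hN : INR N <= INR n) by (apply le_INR; lia).
  assert (small : Rabs (- / INR n) < del).
  { rewrite Rabs_Ropp, Rabs_right by (left; apply Rinv_0_lt_compat; lra).
    apply (Rmult_lt_reg_r (INR n)); [lra|]. rewrite Rinv_l by lra.
    assert (del * INR N <= del * INR n) by (apply Rmult_le_compat_l; [left; apply cond_pos | lra]).
    lra. }
  assert (H := Hdel (- / INR n) (Ropp_neq_0_compat _ (Rinv_neq_0_compat _ (Rgt_not_eq _ _ hn))) small).
  replace (1 + - / INR n) with (1 - / INR n) in H by ring.
  replace (INR n * (f 1 - f (1 - / INR n)))
    with ((f (1 - / INR n) - f 1) / - / INR n) by (field; lra).
  exact H.
Qed.

(* n ((1 - 1/n)^(-s) - 1) -> s, the derivative of -x^(-s) at 1. *)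
Lemma power_difference_lim (s : R) :
  is_lim_seq (fun n => INR n * (Rpower (1 - / INR n) (- s) - 1)) s.
Proof.
  assert (H := difference_quotient_at_1 _ _ (derivable_pt_lim_power 1 (- s) Rlt_0_1)).
  assert (one : forall y, Rpower 1 y = 1) by (intros y; unfold Rpower; now rewrite ln_1, Rmult_0_r, exp_0).
  rewrite !one in H. apply is_lim_seq_opp in H. simpl in H.
  rewrite Rmult_1_r, Ropp_involutive in H.
  eapply is_lim_seq_ext; [|exact H]. intros n. simpl. ring.
Qed.

(* n (ln n - ln (n - 1)) -> 1, the derivative of ln at 1. *)
Lemma ln_difference_lim :
  is_lim_seq (fun n => INR n * (ln (INR n) - ln (INR n - 1))) 1.
Proof.
  assert (H := difference_quotient_at_1 ln _ (derivable_pt_lim_ln 1 Rlt_0_1)).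
  rewrite Rinv_1 in H. apply is_lim_seq_ext_loc with (2 := H).
  exists 2%nat. intros n Hn. rewrite ln_1.
  assert (1 < INR n) by (apply (lt_INR 1); lia).
  replace (1 - / INR n) with ((INR n - 1) / INR n) by (field; lra).
  rewrite ln_div by lra. ring.
Qed.

Lemma gfun_asymptotic (m : nat) : (2 <= m)%nat ->
  is_lim_seq (fun n => (gfun m n + 1) / ((INR m - 1) * INR n * INR m ^ n)) 1.
Proof.
  intros hm. assert (Hm : 2 <= INR m) by (apply (le_INR 2); exact hm).
  set (c := / (INR m - 1)).
  apply is_lim_seq_ext_loc with (u := fun n => 1 - c * / INR n + c * / INR n * (/ INR m) ^ n).
  - exists 1%nat. intros n Hn. assert (0 < INR n) by (apply lt_0_INR; lia).
    unfold gfun, c. rewrite pow_inv. field.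
    repeat split; try lra. apply pow_nonzero. lra.
  - assert (inv_n : is_lim_seq (fun n => / INR n) 0).
    { apply (is_lim_seq_inv _ p_infty); [apply is_lim_seq_INR | discriminate]. }
    assert (geom : is_lim_seq (fun n => (/ INR m) ^ n) 0).
    { apply is_lim_seq_geom. rewrite Rabs_right by (left; apply Rinv_0_lt_compat; lra).
      apply (Rmult_lt_reg_r (INR m)); [lra|]. rewrite Rinv_l by lra. lra. }
    replace (Finite 1) with (Finite (1 - c * 0 + c * 0 * 0)) by (f_equal; ring).
    apply is_lim_seq_plus'; [apply is_lim_seq_minus'|apply is_lim_seq_mult'];
      auto using is_lim_seq_const, is_lim_seq_mult'.
Qed.

Lemma ln_INR_lim : is_lim_seq (fun k => ln (INR k)) p_infty.
Proof.
  apply (is_lim_comp_seq ln INR p_infty p_infty is_lim_ln_p).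
  - exists 0%nat. discriminate.
  - apply is_lim_seq_INR.
Qed.

Lemma power_neg_lim (s : R) : 0 < s -> is_lim_seq (fun k => Rpower (INR k) (- s)) 0.
Proof.
  intros hs. unfold Rpower.
  apply (is_lim_comp_seq exp _ m_infty 0 is_lim_exp_m); [exists 0%nat; discriminate|].
  apply (is_lim_seq_ext (fun k => ln (INR k) * - s)); [intros k; apply Rmult_comm|].
  apply (is_lim_seq_mult _ _ p_infty (- s)); [exact ln_INR_lim | apply is_lim_seq_const |].
  apply is_Rbar_mult_p_infty_neg. simpl. lra.
Qed.

Lemma power_increment_ratio (s : R) : 0 < s ->
  is_lim_seq (fun n => s * Rpower (INR n) (- s - 1)
                       / (Rpower (INR (pred n)) (- s) - Rpower (INR n) (- s))) 1.
Proof.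
  intros hs.
  replace (Finite 1) with (Finite (s / s)) by (f_equal; field; lra).
  apply is_lim_seq_ext_loc with (u := fun n => s / (INR n * (Rpower (1 - / INR n) (- s) - 1))).
  2: { apply is_lim_seq_div'; [apply is_lim_seq_const | apply power_difference_lim | lra]. }
  exists 2%nat. intros n Hn.
  assert (hx : 1 < INR n) by (apply (lt_INR 1); lia).
  assert (pred_x : INR (pred n) = INR n * (1 - / INR n)).
  { rewrite <- Nat.sub_1_r, minus_INR by lia. simpl. field. lra. }
  set (x := INR n) in *.
  assert (base : 0 < 1 - / x < 1).
  { assert (0 < / x) by (apply Rinv_0_lt_compat; lra).
    assert (/ x < 1) by (rewrite <- Rinv_1; apply Rinv_lt_contravar; lra). lra. }
  assert (R1_gt_1 : 1 < Rpower (1 - / x) (- s)).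
  { unfold Rpower. rewrite <- exp_0 at 1. apply exp_increasing.
    assert (ln (1 - / x) < 0) by (rewrite <- ln_1; apply ln_increasing; lra). nra. }
  rewrite pred_x, <- Rpower_mult_distr by lra.
  replace (- s - 1) with (- s + - (1)) by ring.
  rewrite Rpower_plus, (Rpower_Ropp x 1), Rpower_1 by lra.
  assert (0 < Rpower x (- s)) by apply exp_pos.
  field. repeat split; apply Rgt_not_eq; [lra | nra | lra].
Qed.

Lemma log_increment_ratio :
  is_lim_seq (fun n => Rpower (INR n) (- (1)) / (ln (INR n) - ln (INR (pred n)))) 1.
Proof.
  replace (Finite 1) with (Rbar_inv 1) by (simpl; f_equal; field).
  apply is_lim_seq_ext_loc with (u := fun n => / (INR n * (ln (INR n) - ln (INR n - 1)))).
  2: { apply is_lim_seq_inv; [apply ln_difference_lim | simpl; injection; lra]. }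
  exists 1%nat. intros n Hn.
  rewrite Rpower_Ropp, Rpower_1 by (apply lt_0_INR; lia).
  rewrite <- Nat.sub_1_r, minus_INR by lia. simpl INR.
  unfold Rdiv. now rewrite Rinv_mult.
Qed.

Lemma series_value_some (f : nat -> R) (l : R) :
  infinite_sum f l -> series_value f = Some l.
Proof.
  intros H. unfold series_value.
  destruct (excluded_middle_informative _) as [e|n].
  - destruct (constructive_indefinite_description _ e) as [l' Hl']; simpl.
    f_equal. exact (UL_sequence _ _ _ Hl' H).
  - exfalso. apply n. now exists l.
Qed.

Lemma series_value_none (f : nat -> R) :
  ~ (exists l, infinite_sum f l) -> series_value f = None.
Proof.
  intros H. unfold series_value.
  destruct (excluded_middle_informative _) as [e|_]; [contradiction|reflexivity].
Qed.

Lemma infinite_sum_lim (f : nat -> R) (l : R) :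
  infinite_sum f l <-> is_lim_seq (sum_f_R0 f) l.
Proof. rewrite is_lim_seq_Reals. reflexivity. Qed.

Lemma gfun_0 (m : nat) : gfun m 0 = -1.
Proof. unfold gfun. simpl. ring. Qed.

Lemma gfun_nonneg (m k : nat) : (2 <= m)%nat -> (1 <= k)%nat -> 0 <= gfun m k.
Proof.
  intros hm hk. unfold gfun.
  assert (2 <= INR m) by (apply (le_INR 2); exact hm).
  assert (1 <= INR k) by (apply (le_INR 1); exact hk).
  assert (0 < INR m ^ k) by (apply pow_lt; lra).
  apply Rmult_le_pos; nra.
Qed.

(* The mass q k reweighted by 1 + [(m-1)k - 1] m^k; its partial sums up to M
   equal 1 + E{[(m-1)X_0^(M) - 1] m^(X_0^(M))}. *)
Definition crit_mass (m : nat) (q : nat -> R) (k : nat) : R :=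
  q k * (gfun m k + 1).

Lemma crit_mass_ge (m : nat) (q : nat -> R) (k : nat) :
  (2 <= m)%nat -> (forall k, 0 <= q k) -> q 0%nat = 0 -> q k <= crit_mass m q k.
Proof.
  intros hm hq_nonneg hq0. unfold crit_mass. destruct k as [|k].
  - rewrite hq0. lra.
  - assert (H := gfun_nonneg m (S k) hm ltac:(lia)).
    specialize (hq_nonneg (S k)). nra.
Qed.

Lemma crit_mass_nonneg (m : nat) (q : nat -> R) (k : nat) :
  (2 <= m)%nat -> (forall k, 0 <= q k) -> q 0%nat = 0 -> 0 <= crit_mass m q k.
Proof.
  intros hm hq_nonneg hq0.
  exact (Rle_trans _ _ _ (hq_nonneg k) (crit_mass_ge m q k hm hq_nonneg hq0)).
Qed.

Section Expectations.

Variables (m : nat) (q : nat -> R).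
Hypothesis hq_sum : infinite_sum q 1.

Lemma sum_gfun_split (M : nat) :
  sum_f_R0 (fun k => q k * gfun m k) M = sum_f_R0 (crit_mass m q) M - sum_f_R0 q M.
Proof.
  rewrite <- minus_sum. apply sum_eq. intros k _. unfold crit_mass. ring.
Qed.

(* Truncating at M: the mass beyond M is moved to 0, where gfun is -1. *)
Lemma truncated_expectation (M : nat) :
  expect q (fun k => gfun m (if Nat.leb k M then k else 0%nat))
  = Some (sum_f_R0 (crit_mass m q) M - 1).
Proof.
  set (cut := fun k => if Nat.leb k M then crit_mass m q k else 0).
  assert (cut_sums : forall j, (M <= j)%nat -> sum_f_R0 cut j = sum_f_R0 (crit_mass m q) M).
  { intros j Hj. induction Hj as [|j Hj IH].
    - apply sum_eq. intros k Hk. unfold cut. now rewrite (proj2 (Nat.leb_le k M) Hk).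
    - simpl. rewrite IH. unfold cut. rewrite (proj2 (Nat.leb_gt (S j) M)) by lia. ring. }
  unfold expect. apply series_value_some, infinite_sum_lim.
  apply (is_lim_seq_ext (fun j => sum_f_R0 cut j - sum_f_R0 q j)).
  { intros j. rewrite <- minus_sum. apply sum_eq. intros k _. unfold cut, crit_mass.
    destruct (Nat.leb k M); [ring | rewrite gfun_0; ring]. }
  apply is_lim_seq_minus'; [|now apply infinite_sum_lim].
  apply is_lim_seq_ext_loc with (u := fun _ => sum_f_R0 (crit_mass m q) M).
  - exists M. intros j Hj. symmetry. now apply cut_sums.
  - apply is_lim_seq_const.
Qed.

Lemma p_M_eq (M : nat) : p_M m q M = / sum_f_R0 (crit_mass m q) M.
Proof.
  unfold p_M. rewrite truncated_expectation. simpl. f_equal. ring.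
Qed.

Lemma p_c_convergent (E : R) :
  is_lim_seq (sum_f_R0 (crit_mass m q)) E -> p_c m q = / E.
Proof.
  intros HE. unfold p_c, expect.
  rewrite (series_value_some _ (E - 1)); [simpl; f_equal; ring|].
  apply infinite_sum_lim. eapply is_lim_seq_ext; [intros n; symmetry; apply sum_gfun_split|].
  apply is_lim_seq_minus'; [exact HE | now apply infinite_sum_lim].
Qed.

Lemma p_c_divergent :
  is_lim_seq (sum_f_R0 (crit_mass m q)) p_infty -> p_c m q = 0.
Proof.
  intros Hinf. unfold p_c, expect. rewrite series_value_none; [reflexivity|].
  intros [l Hl]. apply infinite_sum_lim in Hl.
  assert (Hfin : is_lim_seq (sum_f_R0 (crit_mass m q)) (l + 1)).
  { apply (is_lim_seq_ext (fun n => sum_f_R0 (fun k => q k * gfun m k) n + sum_f_R0 q n)).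
    - intros n. rewrite sum_gfun_split. ring.
    - apply is_lim_seq_plus'; [exact Hl | now apply infinite_sum_lim]. }
  apply is_lim_seq_unique in Hinf. apply is_lim_seq_unique in Hfin.
  rewrite Hinf in Hfin. discriminate.
Qed.

End Expectations.

Section CriticalGap.

Variables (m : nat) (q : nat -> R) (c0 alpha : R).
Hypothesis hm : (2 <= m)%nat.
Hypothesis hq_nonneg : forall k, 0 <= q k.
Hypothesis hq0 : q 0%nat = 0.
Hypothesis hq_sum : infinite_sum q 1.
Hypothesis hc0 : 0 < c0.
Hypothesis htail :
  is_lim_seq (fun k => q k / (c0 * / (INR m ^ k) * Rpower (INR k) (- alpha))) 1.

(* Since q k ~ c0 m^(-k) k^(-alpha) and 1 + gfun m k ~ (m-1) k m^k, the
   reweighted mass satisfies crit_mass k ~ (m-1) c0 k^(1-alpha); so it is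
   asymptotic to any sequence with that behaviour. *)
Lemma crit_mass_equivalent (delta : nat -> R) :
  is_lim_seq (fun n => (INR m - 1) * c0 * Rpower (INR n) (1 - alpha) / delta n) 1 ->
  is_lim_seq (fun n => crit_mass m q n / delta n) 1.
Proof.
  intros Hdelta.
  assert (L := is_lim_seq_mult' _ _ _ _
                 (is_lim_seq_mult' _ _ _ _ htail (gfun_asymptotic m hm)) Hdelta).
  rewrite !Rmult_1_r in L. apply is_lim_seq_ext_loc with (2 := L).
  exists 1%nat. intros n Hn.
  assert (Hm : 2 <= INR m) by (apply (le_INR 2); exact hm).
  assert (hx : 0 < INR n) by (apply lt_0_INR; lia).
  assert (HP : 0 < Rpower (INR n) (- alpha)) by apply exp_pos.
  assert (Hmn : 0 < INR m ^ n) by (apply pow_lt; lra).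
  replace (1 - alpha) with (1 + - alpha) by ring.
  rewrite Rpower_plus, Rpower_1 by exact hx.
  unfold crit_mass. destruct (Req_dec (delta n) 0) as [h0|h0].
  - unfold Rdiv. rewrite h0, Rinv_0. ring.
  - field. repeat split; [exact h0 | ..]; apply Rgt_not_eq; lra.
Qed.

(* Case 2 < alpha <= 4: with s = alpha - 2 and C = (m-1) c0 / s, crit_mass k
   is asymptotic to the increment of -C k^(-s), so the series of crit_mass
   converges (to a limit E >= 1, as crit_mass k >= q k) with remainder
   ~ C M^(-s). *)
Lemma regular_remainder : 2 < alpha ->
  exists E : R, 1 <= E /\ is_lim_seq (sum_f_R0 (crit_mass m q)) E /\
    is_lim_seq (fun M => (E - sum_f_R0 (crit_mass m q) M) /
      ((INR m - 1) * c0 / (alpha - 2) * Rpower (INR M) (- (alpha - 2)))) 1.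
Proof.
  intros ha.
  assert (Hm : 2 <= INR m) by (apply (le_INR 2); exact hm).
  set (s := alpha - 2). assert (hs : 0 < s) by (unfold s; lra).
  set (C := (INR m - 1) * c0 / s).
  assert (HC : 0 < C) by (unfold C; apply Rdiv_lt_0_compat; nra).
  set (D := fun k => - (C * Rpower (INR k) (- s))).
  assert (Dneg : forall k, D k < 0).
  { intros k. unfold D. assert (0 < Rpower (INR k) (- s)) by apply exp_pos. nra. }
  assert (Dinc : forall k, (1 <= k)%nat -> D k < D (S k)).
  { intros k Hk. unfold D, Rpower.
    assert (0 < INR k) by (apply lt_0_INR; lia).
    assert (ln (INR k) < ln (INR (S k))) by (apply ln_increasing; [lra | apply lt_INR; lia]).
    assert (exp (- s * ln (INR (S k))) < exp (- s * ln (INR k))) by (apply exp_increasing; nra).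
    nra. }
  assert (D0 : is_lim_seq D 0).
  { replace (Finite 0) with (Finite (- (C * 0))) by (f_equal; ring).
    apply is_lim_seq_opp with (l := Finite (C * 0)), is_lim_seq_mult';
      [apply is_lim_seq_const | exact (power_neg_lim s hs)]. }
  assert (Hr : is_lim_seq (fun k => crit_mass m q (S k) / (D (S k) - D k)) 1).
  { apply (is_lim_seq_incr_1 (fun n => crit_mass m q n / (D n - D (pred n)))).
    apply crit_mass_equivalent. apply is_lim_seq_ext_loc with (2 := power_increment_ratio s hs).
    exists 2%nat. intros n Hn.
    assert (gap := Dinc (pred n) ltac:(lia)). replace (S (pred n)) with n in gap by lia.
    replace (1 - alpha) with (- s - 1) by (unfold s; ring).
    unfold D in *; cbv beta in *.
    replace ((INR m - 1) * c0) with (C * s) by (unfold C; field; lra).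
    field. split; apply Rgt_not_eq; [lra | nra]. }
  destruct (summable_of_increments _ D 0 (fun k => crit_mass_nonneg m q k hm hq_nonneg hq0)
              (fun k => Rlt_le _ _ (Dneg k)) Dinc Hr) as [E HE].
  exists E. split; [|split; [exact HE|]].
  - apply (is_lim_seq_le (sum_f_R0 q) (sum_f_R0 (crit_mass m q)) 1 E);
      [|now apply infinite_sum_lim | exact HE].
    intros n. apply sum_Rle. intros k _. now apply crit_mass_ge.
  - apply is_lim_seq_ext with (2 := tail_asymptotic _ D E HE D0 (fun k _ => Dneg k) Dinc Hr).
    intros M. unfold D. now rewrite Ropp_involutive.
Qed.

(* Hence p_c = 1 / E and p_M - p_c = (E - S M) / (E S M) ~ C p_c^2 M^(-s). *)
Lemma critical_gap_regular : 2 < alpha ->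
  is_lim_seq (fun M => (p_M m q M - p_c m q) /
     ((INR m - 1) * c0 * (p_c m q) ^ 2 / (alpha - 2)
       * / Rpower (INR M) (alpha - 2))) 1.
Proof.
  intros ha. destruct (regular_remainder ha) as (E & HE1 & HE & Hrem).
  rewrite (p_c_convergent m q hq_sum E HE).
  assert (Hratio : is_lim_seq (fun M => E / sum_f_R0 (crit_mass m q) M) 1).
  { replace (Finite 1) with (Finite (E / E)) by (f_equal; field; lra).
    apply is_lim_seq_div'; [apply is_lim_seq_const | exact HE | lra]. }
  assert (L := is_lim_seq_mult' _ _ _ _ Hrem Hratio). rewrite Rmult_1_r in L.
  apply is_lim_seq_ext_loc with (2 := L).
  destruct (proj2 (is_lim_seq_spec _ _) HE (mkposreal _ Rlt_0_1)) as [N HN]; simpl in HN.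
  exists N. intros M HM. specialize (HN M HM). apply Rabs_def2 in HN.
  rewrite (p_M_eq m q hq_sum), <- Rpower_Ropp.
  assert (0 < Rpower (INR M) (- (alpha - 2))) by apply exp_pos.
  assert (2 <= INR m) by (apply (le_INR 2); exact hm).
  field. repeat split; apply Rgt_not_eq; lra.
Qed.

(* Case alpha = 2: with C = (m-1) c0 the partial sums of crit_mass grow like
   C ln M, so the expectation is infinite, p_c = 0 and p_M ~ 1 / (C ln M). *)
Lemma critical_gap_boundary : alpha = 2 ->
  is_lim_seq (fun M => (p_M m q M - p_c m q) /
     (/ ((INR m - 1) * c0) * / ln (INR M))) 1.
Proof.
  intros ha.
  assert (Hm : 2 <= INR m) by (apply (le_INR 2); exact hm).
  set (C := (INR m - 1) * c0). assert (HC : 0 < C) by (unfold C; nra).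
  set (D := fun k => C * ln (INR k)).
  set (Sum := sum_f_R0 (crit_mass m q)).
  assert (Dinc : forall k, (1 <= k)%nat -> D k < D (S k)).
  { intros k Hk. unfold D. apply Rmult_lt_compat_l; [lra|].
    apply ln_increasing; [apply lt_0_INR; lia | apply lt_INR; lia]. }
  assert (Dinf : is_lim_seq D p_infty).
  { apply (is_lim_seq_ext (fun k => ln (INR k) * C)); [intros k; apply Rmult_comm|].
    apply (is_lim_seq_mult _ _ p_infty C); [exact ln_INR_lim | apply is_lim_seq_const |].
    apply is_Rbar_mult_p_infty_pos. simpl. lra. }
  assert (Hr : is_lim_seq (fun k => crit_mass m q (S k) / (D (S k) - D k)) 1).
  { apply (is_lim_seq_incr_1 (fun n => crit_mass m q n / (D n - D (pred n)))).
    apply crit_mass_equivalent. apply is_lim_seq_ext_loc with (2 := log_increment_ratio).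
    exists 2%nat. intros n Hn.
    assert (gap := Dinc (pred n) ltac:(lia)). replace (S (pred n)) with n in gap by lia.
    replace (1 - alpha) with (- (1)) by (rewrite ha; ring).
    unfold D in *; cbv beta in *. fold C. field. split; [lra | nra]. }
  assert (Hst := partial_asymptotic _ D Dinf Dinc Hr).
  assert (Sinf : is_lim_seq Sum p_infty).
  { apply is_lim_seq_ext_loc with (u := fun M => Sum M / D M * D M).
    - exists 2%nat. intros M HM. field. apply Rgt_not_eq. unfold D.
      apply Rmult_lt_0_compat; [lra|]. rewrite <- ln_1.
      apply ln_increasing; [lra | apply (lt_INR 1); lia].
    - apply (is_lim_seq_mult _ _ 1 p_infty); [exact Hst | exact Dinf |].
      apply is_Rbar_mult_sym, is_Rbar_mult_p_infty_pos. simpl. lra. }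
  rewrite (p_c_divergent m q hq_sum Sinf).
  replace (Finite 1) with (Rbar_inv 1) by (simpl; f_equal; field).
  apply is_lim_seq_ext with (2 := is_lim_seq_inv _ _ Hst ltac:(simpl; injection; lra)).
  intros M. rewrite (p_M_eq m q hq_sum). fold Sum. unfold D, C, Rdiv.
  rewrite Rminus_0_r, !Rinv_mult, !Rinv_inv. reflexivity.
Qed.

End CriticalGap.

Theorem lemma8p2 (m : nat) (hm : (2 <= m)%nat)
  (q : nat -> R) (c0 alpha : R)
  (hq_nonneg : forall k, 0 <= q k)
  (hq0 : q 0%nat = 0)
  (hq_sum : infinite_sum q 1)
  (hc0 : 0 < c0)
  (halpha : 2 <= alpha <= 4)
  (htail : Un_cv (fun k => q k / (c0 * / (INR m ^ k) * Rpower (INR k) (- alpha))) 1) :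
  (2 < alpha ->
     Un_cv (fun M => (p_M m q M - p_c m q) /
        ((INR m - 1) * c0 * (p_c m q) ^ 2 / (alpha - 2)
          * / Rpower (INR M) (alpha - 2))) 1)
  /\
  (alpha = 2 ->
     Un_cv (fun M => (p_M m q M - p_c m q) /
        (/ ((INR m - 1) * c0) * / ln (INR M))) 1).
Proof.
  apply is_lim_seq_Reals in htail.
  split; intros ha; apply is_lim_seq_Reals.
  - exact (critical_gap_regular m q c0 alpha hm hq_nonneg hq0 hq_sum hc0 htail ha).
  - exact (critical_gap_boundary m q c0 alpha hm hq_sum hc0 htail ha).
Qed.
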